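(* Let $P>0$, $v\ge2$, and let $\Gamma'_{T_1},\Gamma'_{T_2},\Gamma'_R,\Gamma''_{T_1},\Gamma''_{T_2}\ge0$ with $\Gamma'_{T_1}=\Gamma'_{T_2}$ and $\Gamma''_{T_1}=\Gamma''_{T_2}$. Set $B_i=\Gamma''_{T_i}+2\Gamma'_{T_i}+1$ and $C_i=(\Gamma'_R+1)(\Gamma'_{T_i}+1)$ for $i=1,2$. For $(\omega,D)\in(0,1)^2$ let $\bar\gamma_1=P(1-D)^{-v}$, $\bar\gamma_2=PD^{-v}$ and $$\mathcal L(\omega,D)=\frac{B_2-B_1}{\bar\gamma_2}+\frac{B_1+C_1}{\omega\bar\gamma_2}+\frac{B_1-B_2}{\bar\gamma_1}+\frac{B_2+C_2}{(1-\omega)\bar\gamma_1}.$$ Then $(\omega,D)=(1/2,1/2)$ is a global minimizer of $\mathcal L$ over $(0,1)^2$.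
   Context: $\mathcal L$ is (up to a positive factor) the high-SNR asymptotic protocol outage probability of a three-phase two-way relay network as a function of the relay power-allocation coefficient $\omega$ and relay position $D$ (the relay lies on the segment between terminals at normalized distance $1$, at distance $1-D$ from $T_1$ and $D$ from $T_2$); $v$ is the path-loss exponent and $\Gamma'_N,\Gamma''_N$ are the first and second moments of the interference power at node $N$. *)

From Stdlib Require Import Reals.
Open Scope R_scope.

Definition Bcoef (G1 G2 : R) : R := G2 + 2 * G1 + 1.
Definition Ccoef (GR G1 : R) : R := (GR + 1) * (G1 + 1).

(* average SNRs; v is a real path-loss exponent, hence Rpower *)
Definition gbar1 (P v D : R) : R := P * Rpower (1 - D) (- v).
Definition gbar2 (P v D : R) : R := P * Rpower D (- v).

Definition Lfun (P v G1T1 G1T2 G1R G2T1 G2T2 w D : R) : R :=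
  let B1 := Bcoef G1T1 G2T1 in
  let B2 := Bcoef G1T2 G2T2 in
  let C1 := Ccoef G1R G1T1 in
  let C2 := Ccoef G1R G1T2 in
  (B2 - B1) / gbar2 P v D + (B1 + C1) / (w * gbar2 P v D)
  + (B1 - B2) / gbar1 P v D + (B2 + C2) / ((1 - w) * gbar1 P v D).

(* For symmetric interference statistics the difference terms of L cancel and
   L(w, D) = (B + C)/P * (D^v/w + (1-D)^v/(1-w)).  Writing D^v = a^2 and
   (1-D)^v = b^2, the Cauchy-Schwarz (Titu) bound a^2/w + b^2/(1-w) >= (a+b)^2 is
   attained at w = a/(a+b), and a + b = D^(v/2) + (1-D)^(v/2) is minimal at D = 1/2
   because t |-> t^(v/2) is convex when v >= 2.  Both minima are reached at
   (1/2, 1/2). *)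

From Stdlib Require Import Reals Lra Psatz.
Open Scope R_scope.

Lemma ln_le_sub1 (x : R) : 0 < x -> ln x <= x - 1.
Proof.
  intros Hx. pose proof (exp_ineq1_le (ln x)) as H.
  rewrite exp_ln in H; lra.
Qed.

Lemma Rpower_gt0 (y p : R) : 0 < Rpower y p.
Proof. apply exp_pos. Qed.

(* Weighted AM-GM z^q 1^(1-q) <= q z + (1 - q): add the inequalities
   ln t <= t - 1 at t = z/s and t = 1/s with weights q and 1 - q. *)
Lemma Rpower_le_affine (z q : R) :
  0 < z -> 0 <= q <= 1 -> Rpower z q <= 1 + q * (z - 1).
Proof.
  intros Hz Hq.
  set (s := 1 + q * (z - 1)).
  assert (Hs : 0 < s) by (unfold s; nra).
  assert (Hzs : ln z - ln s <= z / s - 1).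
  { replace (ln z - ln s) with (ln (z / s)).
    - apply ln_le_sub1, Rdiv_lt_0_compat; lra.
    - unfold Rdiv. rewrite ln_mult, ln_Rinv; try apply Rinv_0_lt_compat; lra. }
  assert (H1s : - ln s <= / s - 1).
  { rewrite <- ln_Rinv by lra. apply ln_le_sub1, Rinv_0_lt_compat; lra. }
  assert (Hweights : q * (z / s - 1) + (1 - q) * (/ s - 1) = 0).
  { unfold s. field. unfold s in Hs. lra. }
  assert (Hln : q * ln z <= ln s) by nra.
  unfold Rpower. rewrite <- (exp_ln s) by lra.
  destruct (Rle_lt_or_eq _ _ Hln) as [Hlt | ->].
  - left. apply exp_increasing. lra.
  - right. reflexivity.
Qed.

Lemma Rpower_bernoulli (y p : R) :
  0 < y -> 1 <= p -> 1 + p * (y - 1) <= Rpower y p.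
Proof.
  intros Hy Hp.
  assert (Hroot : Rpower (Rpower y p) (/ p) = y).
  { rewrite Rpower_mult, Rinv_r, Rpower_1; lra. }
  assert (Hq : 0 <= / p <= 1).
  { split; [apply Rlt_le, Rinv_0_lt_compat; lra |].
    rewrite <- Rinv_1. apply Rinv_le_contravar; lra. }
  pose proof (Rpower_le_affine (Rpower y p) (/ p) (Rpower_gt0 y p) Hq) as H.
  rewrite Hroot in H.
  apply (Rmult_le_compat_l p) in H; [| lra].
  replace (p * (1 + / p * (Rpower y p - 1))) with (p + Rpower y p - 1) in H
    by (field; lra).
  nra.
Qed.

(* Rescaling by 1/2 reduces to Bernoulli's inequality at 2D and 2(1-D),
   whose linear parts cancel. *)
Lemma Rpower_sum_ge_half (D p : R) : 0 < D < 1 -> 1 <= p ->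
  2 * Rpower (1/2) p <= Rpower D p + Rpower (1 - D) p.
Proof.
  intros HD Hp.
  assert (ED : Rpower D p = Rpower (1/2) p * Rpower (2 * D) p).
  { rewrite Rpower_mult_distr by lra. f_equal. field. }
  assert (ED' : Rpower (1 - D) p = Rpower (1/2) p * Rpower (2 * (1 - D)) p).
  { rewrite Rpower_mult_distr by lra. f_equal. field. }
  pose proof (Rpower_bernoulli (2 * D) p ltac:(lra) Hp).
  pose proof (Rpower_bernoulli (2 * (1 - D)) p ltac:(lra) Hp).
  pose proof (Rpower_gt0 (1/2) p).
  rewrite ED, ED'. nra.
Qed.

Lemma sqr_sum_le_weighted (a b w : R) : 0 < w < 1 ->
  (a + b) * (a + b) <= a * a / w + b * b / (1 - w).
Proof.
  intros Hw.
  assert (Hgap : a * a / w + b * b / (1 - w) - (a + b) * (a + b)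
                 = Rsqr (a * (1 - w) - b * w) / (w * (1 - w)))
    by (unfold Rsqr; field; lra).
  assert (0 <= Rsqr (a * (1 - w) - b * w) / (w * (1 - w))).
  { apply Rmult_le_pos; [apply Rle_0_sqr | apply Rlt_le, Rinv_0_lt_compat; nra]. }
  lra.
Qed.

Lemma weighted_powers_ge (v w D : R) : 2 <= v -> 0 < w < 1 -> 0 < D < 1 ->
  4 * Rpower (1/2) v <= Rpower D v / w + Rpower (1 - D) v / (1 - w).
Proof.
  intros Hv Hw HD.
  assert (Hsq : forall x, 0 < x -> Rpower x v = Rpower x (v/2) * Rpower x (v/2)).
  { intros x Hx. rewrite <- Rpower_plus. f_equal. field. }
  rewrite !Hsq by lra.
  pose proof (Rpower_sum_ge_half D (v/2) HD ltac:(lra)).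
  pose proof (sqr_sum_le_weighted (Rpower D (v/2)) (Rpower (1 - D) (v/2)) w Hw).
  pose proof (Rpower_gt0 (1/2) (v/2)).
  nra.
Qed.

Lemma Lfun_symmetric (P v G1T G1R G2T w D : R) :
  0 < P -> 0 < w < 1 -> 0 < D < 1 ->
  Lfun P v G1T G1T G1R G2T G2T w D
  = (Bcoef G1T G2T + Ccoef G1R G1T) / P
    * (Rpower D v / w + Rpower (1 - D) v / (1 - w)).
Proof.
  intros HP Hw HD.
  unfold Lfun, gbar1, gbar2. rewrite !Rpower_Ropp.
  pose proof (Rpower_gt0 D v). pose proof (Rpower_gt0 (1 - D) v).
  field. repeat split; lra.
Qed.

Theorem corollary1 (P v G1T1 G1T2 G1R G2T1 G2T2 : R) :
  0 < P -> 2 <= v ->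
  0 <= G1T1 -> 0 <= G1T2 -> 0 <= G1R -> 0 <= G2T1 -> 0 <= G2T2 ->
  G1T1 = G1T2 -> G2T1 = G2T2 ->
  forall w D : R, 0 < w < 1 -> 0 < D < 1 ->
    Lfun P v G1T1 G1T2 G1R G2T1 G2T2 (1/2) (1/2)
    <= Lfun P v G1T1 G1T2 G1R G2T1 G2T2 w D.
Proof.
  intros HP Hv HG1T1 _ HG1R HG2T1 _ <- <- w D Hw HD.
  rewrite !Lfun_symmetric by lra.
  apply Rmult_le_compat_l.
  - apply Rmult_le_pos; [unfold Bcoef, Ccoef; nra |].
    apply Rlt_le, Rinv_0_lt_compat; lra.
  - replace (1 - 1/2) with (1/2) by field.
    replace (Rpower (1/2) v / (1/2) + Rpower (1/2) v / (1/2))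
      with (4 * Rpower (1/2) v) by field.
    apply weighted_powers_ge; assumption.
Qed.
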